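(* Let $k\in\mathbb{N}_0\cup\{\infty\}$, let $E,F$ be locally convex super vector spaces, $\mathcal{U}\subseteq\overline{E}^{(k)}$ an open subfunctor and $f\colon\mathcal{U}\to\overline{F}^{(k)}$ a natural transformation such that every $f_\Lambda$ is smooth. Let $\Lambda=\Lambda_n\in\mathbf{Gr}^{(k)}$ and $1\le p\le n$. Let $x\in\mathcal{U}_\Lambda$ be such that no component of $x$ involves $\lambda_p$, i.e. $x\in\overline{E}^{(k)}_{\Delta_p}$ where $\Delta_p$ is the span of all $\lambda_I$ with $p\notin I$, and let $y\in\overline{E}^{(k)}_{\lambda_p\Lambda}$. Then $x+y\in\mathcal{U}_\Lambda$ and $$f_\Lambda(x+y)=f_\Lambda(x)+df_\Lambda(x)(y).$$
   Context: Grassmann algebras $\Lambda_n=\mathbb{R}[\lambda_1,\dots,\lambda_n]$ (anticommuting generators, basis $\lambda_I$, grading by parity of $|I|$), category $\mathbf{Gr}^{(k)}$ of $\Lambda_0,\dots,\Lambda_k$ with parity-preserving unital algebra homomorphisms. For a locally convex super vector space $E=E_0\oplus E_1$: $\overline{E}^{(k)}_\Lambda=(E_0\otimes\Lambda_{\bar 0})\oplus(E_1\otimes\Lambda_{\bar1})$, functorial via $\mathrm{id}\otimes\varrho$; for a linear subspace $\Delta\subseteq\Lambda$, $\overline{E}^{(k)}_\Delta:=(E_0\otimes(\Delta\cap\Lambda_{\bar0}))\oplus(E_1\otimes(\Delta\cap\Lambda_{\bar1}))$. An open subfunctor $\mathcal{U}\subseteq\overline{E}^{(k)}$: open sets $\mathcal{U}_\Lambda$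 stable under all $\overline{E}^{(k)}_\varrho$. Smoothness is Bastiani smoothness. *)

From Stdlib Require Import Reals List FunctionalExtensionality.
From mathcomp Require Import all_boot.
Set Implicit Arguments. Unset Strict Implicit. Unset Printing Implicit Defensive.

Open Scope R_scope.

Record LCS := {
  car :> Type;
  vadd : car -> car -> car;
  vzero : car;
  vopp : car -> car;
  vscal : R -> car -> car;
  vaddA : forall x y z, vadd x (vadd y z) = vadd (vadd x y) z;
  vaddC : forall x y, vadd x y = vadd y x;
  vadd0 : forall x, vadd vzero x = x;
  vaddN : forall x, vadd x (vopp x) = vzero;
  vscal1 : forall x, vscal 1 x = x;
  vscalA : forall a b x, vscal a (vscal b x) = vscal (a * b) x;
  vscalDr : forall a x y, vscal a (vadd x y) = vadd (vscal a x) (vscal a y);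
  vscalDl : forall a b x, vscal (a + b) x = vadd (vscal a x) (vscal b x);
  sidx : Type;
  sn : sidx -> car -> R;
  sn_scal : forall i a x, sn i (vscal a x) = Rabs a * sn i x;
  sn_tri : forall i x y, sn i (vadd x y) <= sn i x + sn i y;
  sn_sep : forall x, (forall i, sn i x = 0) -> x = vzero
}.

Arguments vadd {l}. Arguments vzero {l}. Arguments vopp {l}. Arguments vscal {l}.
Arguments sn {l}.

Definition vsub {X : LCS} (x y : X) : X := vadd x (vopp y).

Section Prod.
Variables (T : finType) (F : T -> LCS).
Definition pcar := forall t, F t.
Definition padd (x y : pcar) : pcar := fun t => vadd (x t) (y t).
Definition pzero : pcar := fun t => vzero.
Definition popp (x : pcar) : pcar := fun t => vopp (x t).
Definition pscal (a : R) (x : pcar) : pcar := fun t => vscal a (x t).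
Definition psidx := {t : T & sidx (F t)}.
Definition psn (i : psidx) (x : pcar) : R := sn (projT2 i) (x (projT1 i)).

Lemma paddA x y z : padd x (padd y z) = padd (padd x y) z.
Proof. apply functional_extensionality_dep=> t; apply vaddA. Qed.
Lemma paddC x y : padd x y = padd y x.
Proof. apply functional_extensionality_dep=> t; apply vaddC. Qed.
Lemma padd0 x : padd pzero x = x.
Proof. apply functional_extensionality_dep=> t; apply vadd0. Qed.
Lemma paddN x : padd x (popp x) = pzero.
Proof. apply functional_extensionality_dep=> t; apply vaddN. Qed.
Lemma pscal1 x : pscal 1 x = x.
Proof. apply functional_extensionality_dep=> t; apply vscal1. Qed.
Lemma pscalA a b x : pscal a (pscal b x) = pscal (a * b) x.
Proof. apply functional_extensionality_dep=> t; apply vscalA. Qed.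
Lemma pscalDr a x y : pscal a (padd x y) = padd (pscal a x) (pscal a y).
Proof. apply functional_extensionality_dep=> t; apply vscalDr. Qed.
Lemma pscalDl a b x : pscal (a + b) x = padd (pscal a x) (pscal b x).
Proof. apply functional_extensionality_dep=> t; apply vscalDl. Qed.
Lemma psn_scal i a x : psn i (pscal a x) = Rabs a * psn i x.
Proof. destruct i; apply sn_scal. Qed.
Lemma psn_tri i x y : psn i (padd x y) <= psn i x + psn i y.
Proof. destruct i; apply sn_tri. Qed.
Lemma psn_sep x : (forall i, psn i x = 0) -> x = pzero.
Proof.
move=> H; apply functional_extensionality_dep=> t; apply sn_sep=> j.
exact (H (existT _ t j)).
Qed.

Definition prodLCS : LCS :=
  Build_LCS paddA paddC padd0 paddN pscal1 pscalA pscalDr pscalDl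
            psn_scal psn_tri psn_sep.
End Prod.

Definition ball {X : LCS} (L : list (sidx X)) (d : R) (x w : X) : Prop :=
  forall i, In i L -> sn i (vsub w x) < d.

Definition is_open {X : LCS} (U : X -> Prop) : Prop :=
  forall x, U x -> exists L d, 0 < d /\ forall w, ball L d x w -> U w.

Definition cont_on {X Y : LCS} (S : X -> Prop) (g : X -> Y) : Prop :=
  forall x, S x -> forall (j : sidx Y) eps, 0 < eps ->
    exists L d, 0 < d /\ forall w, S w -> ball L d x w -> sn j (vsub (g w) (g x)) < eps.

Definition dir_deriv {X Y : LCS} (U : X -> Prop) (f : X -> Y) (x h : X) (v : Y) : Prop :=
  forall (j : sidx Y) eps, 0 < eps -> exists d, 0 < d /\
    forall t : R, t <> 0 -> Rabs t < d -> U (vadd x (vscal t h)) ->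
      sn j (vsub (vscal (/ t) (vsub (f (vadd x (vscal t h))) (f x))) v) < eps.

(* X^{j+1}: index 0 is the base point, indices 1..j are directions *)
Definition Xpow (X : LCS) (j : nat) : LCS := prodLCS (fun _ : 'I_j.+1 => X).

Definition xp_ext {X : LCS} {j : nat} (z : Xpow X j) (h : X) : Xpow X j.+1 :=
  fun i : 'I_j.+2 => if (i < j.+1)%N then z (inord (nat_of_ord i)) else h.

Definition xp_e0 {X : LCS} {j : nat} (h : X) : Xpow X j :=
  fun i : 'I_j.+1 => if i == ord0 then h else vzero.

(* Bastiani smoothness on the open set U: all iterated directional derivatives
   d^j f(x; h_1,...,h_j) exist and are continuous on U x X^j, where
   d^{j+1} f(x; h_1..h_{j+1}) = lim_{t->0} (d^j f(x + t h_{j+1}; h_1..h_j)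
                                              - d^j f(x; h_1..h_j)) / t. *)
Definition bastiani_smooth {X Y : LCS} (U : X -> Prop) (f : X -> Y) : Prop :=
  exists D : forall j : nat, Xpow X j -> Y,
    (forall z : Xpow X 0, U (z ord0) -> D 0%N z = f (z ord0)) /\
    (forall (j : nat) (z : Xpow X j) (h : X), U (z ord0) ->
        dir_deriv (fun w : Xpow X j => U (w ord0)) (D j) z (xp_e0 h) (D j.+1 (xp_ext z h))) /\
    (forall j : nat, cont_on (fun w : Xpow X j => U (w ord0)) (D j)).

(* element of Lambda_n: coefficients a_I w.r.t. the basis lambda_I, I subset of
   {1..n} (represented as {set 'I_n}, 0-based). *)
Definition Grass (n : nat) := {set 'I_n} -> R.

Definition gsum {T : finType} (F : T -> R) : R := \big[Rplus/0]_(t : T) F t.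

(* lambda_I lambda_J = gsign I J * lambda_{I u J} when I, J disjoint, else 0 *)
Definition gsign {n} (I J : {set 'I_n}) : R :=
  (-1) ^ #|[set pq : 'I_n * 'I_n | [&& pq.1 \in I, pq.2 \in J & (pq.2 < pq.1)%N]]|.

Definition gmul {n} (a b : Grass n) : Grass n := fun K =>
  gsum (fun I : {set 'I_n} => gsum (fun J : {set 'I_n} =>
    if (I :&: J == set0) && (I :|: J == K) then gsign I J * a I * b J else 0)).

Definition gone {n} : Grass n := fun K => if K == set0 then 1 else 0.
Definition gadd {n} (a b : Grass n) : Grass n := fun K => a K + b K.
Definition gscal {n} (c : R) (a : Grass n) : Grass n := fun K => c * a K.
Definition lam {n} (I : {set 'I_n}) : Grass n := fun K => if K == I then 1 else 0.

Definition g_even {n} (a : Grass n) : Prop := forall I : {set 'I_n}, odd #|I| -> a I = 0.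
Definition g_odd {n} (a : Grass n) : Prop := forall I : {set 'I_n}, ~~ odd #|I| -> a I = 0.

Definition is_grhom {m n} (rho : Grass m -> Grass n) : Prop :=
  (forall a b, rho (gadd a b) = gadd (rho a) (rho b)) /\
  (forall c a, rho (gscal c a) = gscal c (rho a)) /\
  (forall a b, rho (gmul a b) = gmul (rho a) (rho b)) /\
  rho gone = gone /\
  (forall a, g_even a -> g_even (rho a)) /\
  (forall a, g_odd a -> g_odd (rho a)).

(* objects of Gr^(k), k in N_0 u {oo} (None = oo) *)
Definition inGr (k : option nat) (n : nat) : Prop :=
  match k with None => True | Some k => (n <= k)%N end.

(* a super vector space E = E_0 (+) E_1 is given by E false = E_0, E true = E_1 *)
Definition Ebar (E : bool -> LCS) (n : nat) : LCS :=
  prodLCS (fun I : {set 'I_n} => E (odd #|I|)).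

Definition castE (E : bool -> LCS) (b c : bool) (v : E b) : E c :=
  match Bool.bool_dec b c with
  | left e => eq_rect b (fun d => E d) v c e
  | right _ => vzero
  end.

Definition vsum {X : LCS} {T : finType} (F : T -> X) : X := \big[vadd/vzero]_(t : T) F t.

(* E-bar_rho = id (x) rho :  sum_I x_I (x) lambda_I  |->  sum_I x_I (x) rho(lambda_I) *)
Definition Ebar_map (E : bool -> LCS) {m n} (rho : Grass m -> Grass n)
  (x : Ebar E m) : Ebar E n :=
  fun J : {set 'I_n} =>
    vsum (fun I : {set 'I_m} => vscal (rho (lam I) J) (@castE E (odd #|I|) (odd #|J|) (x I))).

(* x in E-bar_Delta for Delta spanned by the basis vectors lambda_I with P I *)
Definition in_Ebar_span (E : bool -> LCS) {n} (P : {set 'I_n} -> bool) (x : Ebar E n) : Prop :=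
  forall I : {set 'I_n}, ~~ P I -> x I = vzero.

(* Delta_p = span{lambda_I : p notin I};  lambda_p Lambda = span{lambda_I : p in I} *)
Definition Delta_p {n} (p : 'I_n) : {set 'I_n} -> bool := fun I => p \notin I.
Definition lamp_Lambda {n} (p : 'I_n) : {set 'I_n} -> bool := fun I => p \in I.

(* Rescaling the generator lambda_p by s is an endomorphism of Lambda_n in Gr^(k), also for
   s = 0.  On E-bar it fixes the part of a point free of lambda_p and multiplies the part in
   lambda_p Lambda by s, so it maps x + y to x + s y.  Openness gives x + t y in U for some
   t > 0, and rescaling by 1/t then gives x + y in U.  Naturality of f turns the same
   rescaling into f(x + t y) = g_0 + t g_1, where g_0 and g_1 are the two parts of
   f(x + y): the curve t |-> f(x + t y) is affine, hence differentiable at 0 with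
   derivative g_1 = f(x + y) - f(x). *)
From HB Require Import structures.
From Stdlib Require Import Reals List Lra FunctionalExtensionality.
From mathcomp Require Import all_boot.
Set Implicit Arguments. Unset Strict Implicit. Unset Printing Implicit Defensive.
Open Scope R_scope.

HB.instance Definition _ (X : LCS) :=
  Monoid.isComLaw.Build (car X) vzero vadd (@vaddA X) (@vaddC X) (@vadd0 X).

Section LCSTheory.
Variable X : LCS.
Implicit Types v w : X.

Lemma vaddr0 v : vadd v vzero = v.
Proof. by rewrite vaddC vadd0. Qed.

Lemma vscal0 v : vscal 0 v = vzero.
Proof.
have h : vscal 0 v = vadd (vscal 0 v) (vscal 0 v) by rewrite -vscalDl Rplus_0_r.
by rewrite -[RHS](vaddN (vscal 0 v)) {2}h -vaddA vaddN vaddr0.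
Qed.

Lemma vscalr0 a : vscal a (@vzero X) = vzero.
Proof. by rewrite -(vscal0 vzero) vscalA Rmult_0_r. Qed.

Lemma sn0 i : sn i (@vzero X) = 0.
Proof. by rewrite -(vscal0 vzero) sn_scal Rabs_R0 Rmult_0_l. Qed.

Lemma vsub_addl v w : vsub (vadd v w) v = w.
Proof. by rewrite /vsub (vaddC v w) -vaddA vaddN vaddr0. Qed.

Lemma small_multiple_exists (L : list (sidx X)) d v :
  0 < d -> exists t, 0 < t /\ forall i, In i L -> t * sn i v < d.
Proof.
move=> d0; elim: L => [|a L [t [t0 Ht]]]; first by exists 1; split=> //; lra.
pose c := 1 + Rabs (sn a v).
have c0 : 0 < c by have := Rabs_pos (sn a v); rewrite /c; lra.
have dc0 : 0 < d / c by apply: Rdiv_lt_0_compat.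
exists (Rmin t (d / c)); split; first exact: Rmin_glb_lt.
have le_t := Rmin_l t (d / c); have le_dc := Rmin_r t (d / c).
move=> i /= [<-|iL].
- have bound : d / c * Rabs (sn a v) < d.
    rewrite /Rdiv Rmult_assoc -[X in _ < X]Rmult_1_r; apply: Rmult_lt_compat_l => //.
    apply: (Rmult_lt_reg_l c) => //; rewrite -Rmult_assoc Rinv_r; last lra.
    by rewrite /c; lra.
  have pos_min : 0 < Rmin t (d / c) by exact: Rmin_glb_lt.
  have : Rmin t (d / c) * sn a v <= Rmin t (d / c) * Rabs (sn a v).
    by apply: Rmult_le_compat_l; [lra | exact: Rle_abs].
  have : Rmin t (d / c) * Rabs (sn a v) <= d / c * Rabs (sn a v).
    by apply: Rmult_le_compat_r => //; exact: Rabs_pos.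
  lra.
- have := Ht i iL; case: (Rle_lt_dec 0 (sn i v)) => sgn.
  + have : Rmin t (d / c) * sn i v <= t * sn i v by apply: Rmult_le_compat_r.
    lra.
  + have : Rmin t (d / c) * sn i v < 0 by apply: Rmult_pos_neg => //; exact: Rmin_glb_lt.
    lra.
Qed.

Lemma open_ray_exists (U : X -> Prop) x h :
  is_open U -> U x -> exists t, 0 < t /\ U (vadd x (vscal t h)).
Proof.
move=> Uopen Ux; have [L [d [d0 ball_sub]]] := Uopen x Ux.
have [t [t0 small]] := small_multiple_exists L h d0.
exists t; split=> //; apply: ball_sub => i iL.
by rewrite vsub_addl sn_scal Rabs_pos_eq; [apply: small | lra].
Qed.

End LCSTheory.

Lemma dir_deriv_affine (X Y : LCS) (U : X -> Prop) (f : X -> Y) x h (v : Y) :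
  (forall t, U (vadd x (vscal t h)) -> f (vadd x (vscal t h)) = vadd (f x) (vscal t v)) ->
  dir_deriv U f x h v.
Proof.
move=> affine j eps eps0; exists 1; split; first lra.
move=> t t_neq0 _ Uxth; rewrite affine // vsub_addl vscalA Rinv_l // vscal1.
by rewrite /vsub vaddN sn0.
Qed.

Lemma gsum_mull (T : finType) c (F : T -> R) : gsum (fun t => c * F t) = c * gsum F.
Proof. by rewrite /gsum; elim/big_rec2: _ => [|i y1 y2 _ ->]; ring. Qed.

Definition gen_weight {n} (p : 'I_n) (s : R) (K : {set 'I_n}) : R :=
  if p \in K then s else 1.

(* The algebra endomorphism lambda_p |-> s lambda_p, lambda_q |-> lambda_q for q <> p. *)
Definition grass_scale {n} (p : 'I_n) (s : R) (a : Grass n) : Grass n :=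
  fun K => gen_weight p s K * a K.

Lemma grass_scale_grhom n (p : 'I_n) s : is_grhom (grass_scale p s).
Proof.
rewrite /grass_scale; split; [|split; [|split; [|split; [|split]]]].
- by move=> a b; apply: functional_extensionality => K; rewrite /gadd; ring.
- by move=> c a; apply: functional_extensionality => K; rewrite /gscal; ring.
- move=> a b; apply: functional_extensionality => K; rewrite /gmul.
  rewrite -gsum_mull; congr gsum; apply: functional_extensionality => I.
  rewrite -gsum_mull; congr gsum; apply: functional_extensionality => J.
  case: ifP => [/andP[/eqP disjIJ /eqP <-]|_]; last ring.
  have : p \in I :&: J = false by rewrite disjIJ in_set0.
  rewrite /gen_weight in_setU in_setI.
  by case: (p \in I); case: (p \in J) => //= _; ring.
- apply: functional_extensionality => K; rewrite /gone /gen_weight.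
  by case: eqP => [->|_]; rewrite ?in_set0; ring.
- by move=> a a_even I oddI; rewrite a_even // Rmult_0_r.
- by move=> a a_odd I evenI; rewrite a_odd // Rmult_0_r.
Qed.

Section EbarScale.
Variables (E : bool -> LCS) (n : nat) (p : 'I_n).

Definition Delta_part (z : Ebar E n) : Ebar E n :=
  fun J => if p \in J then vzero else z J.

Definition lamp_part (z : Ebar E n) : Ebar E n :=
  fun J => if p \in J then z J else vzero.

Lemma castE_id b (v : E b) : @castE E b b v = v.
Proof.
rewrite /castE; case: Bool.bool_dec => // e.
by rewrite (eq_irrelevance e erefl).
Qed.

Lemma Ebar_map_grass_scale s (z : Ebar E n) :
  Ebar_map (grass_scale p s) z = vadd (Delta_part z) (vscal s (lamp_part z)).
Proof.
apply: functional_extensionality_dep => J; rewrite /Ebar_map /vsum (bigD1 J) //= big1.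
- rewrite vaddr0 /grass_scale /lam eqxx Rmult_1_r castE_id /padd /pscal.
  rewrite /Delta_part /lamp_part /gen_weight.
  by case: (p \in J); rewrite ?vadd0 ?vscal1 ?vscalr0 ?vaddr0.
- move=> I /negPf neqIJ; rewrite /grass_scale /lam eq_sym neqIJ Rmult_0_r.
  exact: vscal0.
Qed.

Lemma Ebar_map_grass_scale_span s (x y : Ebar E n) :
  in_Ebar_span (Delta_p p) x -> in_Ebar_span (lamp_Lambda p) y ->
  Ebar_map (grass_scale p s) (vadd x y) = vadd x (vscal s y).
Proof.
move=> xD yL; rewrite Ebar_map_grass_scale.
apply: functional_extensionality_dep => J /=.
rewrite /padd /pscal /Delta_part /lamp_part.
case pJ: (p \in J).
- by rewrite xD /Delta_p ?pJ // !vadd0.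
- by rewrite yL /lamp_Lambda ?pJ // !vaddr0 vscalr0.
Qed.

End EbarScale.

Theorem mainTheorem3
  (k : option nat) (E F : bool -> LCS)
  (U : forall n : nat, Ebar E n -> Prop)
  (f : forall n : nat, Ebar E n -> Ebar F n)
  (HUopen : forall n, inGr k n -> is_open (U n))
  (HUsub : forall (m n : nat) (rho : Grass m -> Grass n),
      inGr k m -> inGr k n -> is_grhom rho ->
      forall x, U m x -> U n (@Ebar_map E m n rho x))
  (Hnat : forall (m n : nat) (rho : Grass m -> Grass n),
      inGr k m -> inGr k n -> is_grhom rho ->
      forall x, U m x -> f n (@Ebar_map E m n rho x) = @Ebar_map F m n rho (f m x))
  (Hsmooth : forall n, inGr k n -> bastiani_smooth (U n) (f n))
  (n : nat) (Hn : inGr k n) (p : 'I_n) (x y : Ebar E n)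
  (Hx : U n x)
  (HxD : in_Ebar_span (Delta_p p) x)
  (HyD : in_Ebar_span (lamp_Lambda p) y) :
  U n (vadd x y) /\
  exists v, dir_deriv (U n) (f n) x y v /\ f n (vadd x y) = vadd (f n x) v.
Proof.
have scale_ray s t : Ebar_map (grass_scale p s) (vadd x (vscal t y)) = vadd x (vscal (s * t) y).
  rewrite Ebar_map_grass_scale_span ?vscalA // => I /HyD y_I.
  by rewrite /= /pscal y_I vscalr0.
have Uxy : U n (vadd x y).
  have [t [t0 Uxty]] := open_ray_exists y (HUopen n Hn) Hx.
  have := HUsub n n _ Hn Hn (grass_scale_grhom p (/ t)) _ Uxty.
  by rewrite scale_ray Rinv_l ?vscal1 //; lra.
pose g := f n (vadd x y).
have f_ray t : f n (vadd x (vscal t y)) = vadd (Delta_part p g) (vscal t (lamp_part p g)).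
  rewrite -Ebar_map_grass_scale -(Hnat _ _ _ Hn Hn (grass_scale_grhom p t) _ Uxy).
  by rewrite -[in LHS](Rmult_1_r t) -scale_ray vscal1.
have f_x : f n x = Delta_part p g by have := f_ray 0; rewrite !vscal0 !vaddr0.
have affine t : f n (vadd x (vscal t y)) = vadd (f n x) (vscal t (lamp_part p g)).
  by rewrite f_ray f_x.
split=> //; exists (lamp_part p g); split; first by apply: dir_deriv_affine => t _; exact: affine.
by rewrite -[y in LHS]vscal1 affine vscal1.
Qed.
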